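(* Let \[ q(x,y,z,a,b)=\frac{(1+xz)(1+yz)}{1-xy}-a\frac{(x+z)(1+yz)}{x-y}+b\frac{(1+xz)(y+z)}{x-y}-ab\frac{(x+z)(y+z)}{1-xy}. \] For indeterminates $x_1,\dots,x_n$, $y_1,\dots,y_n$, $a_1,\dots,a_n$, $b_1,\dots,b_n$, $z$, \[ \det\left(q(x_i,y_j,z,a_i,b_j)\right)_{1\le i,j\le n}=\frac{(-1)^n}{\prod_{i=1}^n\prod_{j=1}^n(x_i-y_j)(1-x_iy_j)}\det W, \] where $W=(W_{i,j})_{1\le i,j\le 2n+1}$ is given, for $1\le j\le 2n+1$, by $W_{i,j}=x_i^{j-1}-a_ix_i^{2n+1-j}$ for $1\le i\le n$, $W_{i,j}=y_{i-n}^{j-1}-b_{i-n}y_{i-n}^{2n+1-j}$ for $n+1\le i\le 2n$, and $W_{2n+1,j}=(-z)^{2n+1-j}$. *)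

From HB Require Import structures.
From mathcomp Require Import all_boot all_order all_algebra.
Set Implicit Arguments. Unset Strict Implicit. Unset Printing Implicit Defensive.
Import Order.TTheory GRing.Theory Num.Theory.
Local Open Scope ring_scope.

Definition qfun (F : fieldType) (x y z a b : F) : F :=
  (1 + x * z) * (1 + y * z) / (1 - x * y)
  - a * ((x + z) * (1 + y * z) / (x - y))
  + b * ((1 + x * z) * (y + z) / (x - y))
  - a * b * ((x + z) * (y + z) / (1 - x * y)).

Definition Qmat (F : fieldType) (n : nat) (x y a b : 'I_n -> F) (z : F)
  : 'M[F]_n := \matrix_(i < n, j < n) qfun (x i) (y j) z (a i) (b j).

(* The (2n+1)x(2n+1) matrix W, rows split as n (x-rows) + n (y-rows) + 1
   (z-row); columns j = 0..2n (0-based, i.e. paper's j-1). *)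
Definition Wmat (F : fieldType) (n : nat) (x y a b : 'I_n -> F) (z : F)
  : 'M[F]_(n + n + 1) :=
  col_mx
    (col_mx
       (\matrix_(i < n, j < n + n + 1) (x i ^+ j - a i * x i ^+ (n + n - j)))
       (\matrix_(i < n, j < n + n + 1) (y i ^+ j - b i * y i ^+ (n + n - j))))
    (\matrix_(i < 1, j < n + n + 1) ((- z) ^+ (n + n - j))).

From HB Require Import structures.
From mathcomp Require Import all_boot all_order all_algebra.
From mathcomp Require Import zify ring.
Set Implicit Arguments. Unset Strict Implicit. Unset Printing Implicit Defensive.
Import Order.TTheory GRing.Theory Num.Theory.
Local Open Scope ring_scope.

(* Clearing denominators, q(x_i, y_j, z, a_i, b_j) (x_i - y_j) (1 - x_i y_j) = - D_ij with D_ij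
   ([qnum]) bilinear in (u_i, u1_i) = (1 + x_i z, a_i (x_i + z)) and
   (v_j, v1_j) = (1 + y_j z, b_j (y_j + z)); so det Q is, up to the prefactor, the determinant
   of L_ij = D_ij psi_j(x_i), where psi_j(t) = prod_(k <> j) (t - y_k) (1 - y_k t).
   Adding z times column j+1 to column j of W clears its last row and leaves the 2n x 2n matrix
   M with rows u_i x_i^m - u1_i x_i^(2n-1-m) and v_j y_j^m - v1_j y_j^(2n-1-m).
   Multiply M by the coefficient matrix C of c_j = (1 - y_j t) psi_j and d_j = (t - y_j) psi_j:
   since t^(2n-1) c_j(1/t) = d_j(t), every entry of M C is a combination of two evaluations.
   On the y-rows c_j and d_j vanish at y_k (k <> j), so the lower blocks of M C are diagonal
   and its Schur complement is L diag(c_j(y_j)); evaluating C at the points y_j and 1/y_j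
   (a Vandermonde matrix) gives det C = prod_j c_j(y_j).  This needs the y_j distinct, nonzero
   and with y_j y_k <> 1; the identity det M = det L then holds generically over F(X) for a
   perturbation of the data, and evaluating at X = 0 gives it in general. *)

Lemma det_block_mx_diag (K : fieldType) n (A B : 'M[K]_n) (c d : 'rV[K]_n) :
  (forall j, d 0 j != 0) ->
  \det (block_mx A B (diag_mx c) (diag_mx d)) = \det (A *m diag_mx d - B *m diag_mx c).
Proof.
move=> d_neq0; pose e : 'rV[K]_n := \row_j (d 0 j)^-1.
have ed : diag_mx e *m diag_mx d = 1%:M.
  rewrite mulmx_diag; apply/matrixP => i j; rewrite !mxE.
  by case: (i == j); rewrite ?mulr1n ?mulr0n // mulVf.
have -> : block_mx A B (diag_mx c) (diag_mx d) =
    block_mx (A - B *m (diag_mx e *m diag_mx c)) B 0 (diag_mx d) *m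
    block_mx 1%:M 0 (diag_mx e *m diag_mx c) 1%:M.
  rewrite mulmx_block !mulmx1 !mulmx0 ?mul0mx !add0r ?addr0.
  by rewrite subrK mulmxA diag_mxC ed mul1mx.
rewrite det_mulmx det_ublock det_lblock !det1 !mulr1 -det_mulmx.
by rewrite mulmxBl -!mulmxA [diag_mx c *m _]diag_mxC [diag_mx e *m _]mulmxA ed mul1mx.
Qed.

Lemma sum_delta (R : pzSemiRingType) N (f : 'I_N -> R) (j : nat) (k0 : 'I_N) :
  k0 = j :> nat -> \sum_(k < N) f k * (k == j :> nat)%:R = f k0.
Proof.
move=> k0j; rewrite (bigD1 k0) //= k0j eqxx mulr1 big1 ?addr0 // => k neq_k.
by rewrite -k0j (inj_eq val_inj) (negPf neq_k) mulr0.
Qed.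

Lemma sum_delta_out (R : pzSemiRingType) N (f : 'I_N -> R) (j : nat) :
  (N <= j)%N -> \sum_(k < N) f k * (k == j :> nat)%:R = 0.
Proof.
move=> le_Nj; apply: big1 => k _.
by rewrite ltn_eqF ?mulr0 // (leq_trans (ltn_ord k) le_Nj).
Qed.

Lemma prod_neq_pairs (R : comPzRingType) n (f : 'I_n -> 'I_n -> R) :
  \prod_(j < n) \prod_(k < n | k != j) f j k =
  \prod_(i < n) \prod_(j < n | (i < j)%N) (f i j * f j i).
Proof.
under [RHS]eq_bigr do rewrite big_split.
rewrite big_split /= [X in _ = _ * X](exchange_big_dep xpredT) //= -big_split.
apply: eq_bigr => j _; rewrite (bigID (fun k : 'I_n => (j < k)%N)) /=.
by congr (_ * _); apply: eq_bigl => k; rewrite -val_eqE /=; lia.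
Qed.

Lemma prod_lt_row_mx (R : comPzRingType) m n (a : 'I_m -> R) (b : 'I_n -> R) :
  let c := row_mx (\row_j a j) (\row_j b j) in
  \prod_(i < m + n) \prod_(j < m + n | (i < j)%N) (c 0 j - c 0 i) =
  \prod_(i < m) \prod_(j < m | (i < j)%N) (a j - a i) *
  \prod_(i < m) \prod_(j < n) (b j - a i) *
  \prod_(i < n) \prod_(j < n | (i < j)%N) (b j - b i).
Proof.
move=> c; rewrite big_split_ord /= -big_split /=; congr (_ * _).
  apply: eq_bigr => i _; rewrite big_split_ord /=; congr (_ * _).
    by apply: eq_big => [j|j _]; rewrite /c ?row_mxEl ?mxE.
  apply: eq_big => [j|j _]; rewrite /c ?row_mxEl ?row_mxEr ?mxE //=.
  by have := ltn_ord i; lia.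
apply: eq_bigr => i _; rewrite big_split_ord /= big_pred0 ?mul1r; last first.
  by move=> j; have := ltn_ord j; rewrite /=; lia.
by apply: eq_big => [j|j _]; rewrite /c ?row_mxEr ?mxE //= ltn_add2l.
Qed.

Lemma size_1subCX_mul (R : nzRingType) (c : R) (p : {poly R}) :
  (size ((1 - c%:P * 'X) * p)%R <= (size p).+1)%N.
Proof.
apply: leq_trans (size_polyMleq _ _) _.
rewrite addrC -mulNr -polyCN -polyC1 size_MXaddC.
by rewrite size_polyC; case: ifP => _; case: (- c != 0) => /=; lia.
Qed.

Definition mirror_mx (R : comPzRingType) n (x u v : 'I_n -> R) : 'M[R]_(n, n + n) :=
  \matrix_(i, m) (u i * x i ^+ m - v i * x i ^+ ((n + n).-1 - m)).

Definition mirror_block (R : comPzRingType) n (x y u u1 v v1 : 'I_n -> R) :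
  'M[R]_(n + n) := col_mx (mirror_mx x u u1) (mirror_mx y v v1).

Definition qnum (R : comPzRingType) n (x y u u1 v v1 : 'I_n -> R) (i j : 'I_n) : R :=
  u i * v j * (y j - x i) + (u1 i * v j - u i * v1 j) * (1 - x i * y j)
  + u1 i * v1 j * (x i - y j).

Definition qnum_mx (R : comPzRingType) n (x y u u1 v v1 : 'I_n -> R) : 'M[R]_n :=
  \matrix_(i, j) (qnum x y u u1 v v1 i j *
                  \prod_(k < n | k != j) ((x i - y k) * (1 - x i * y k))).

Section CoefficientMatrix.
Variable K : fieldType.

Definition coef_mx N n (p : 'I_n -> {poly K}) : 'M[K]_(N, n) := \matrix_(m, j) (p j)`_m.

Definition pow_mx N n (t : 'I_n -> K) : 'M[K]_(n, N) := \matrix_(i, m) (t i ^+ m).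

Lemma pow_mx_mul_coef N n (t : 'I_n -> K) (p : 'I_n -> {poly K}) :
  (forall j, size (p j) <= N)%N ->
  pow_mx N t *m coef_mx N p = \matrix_(i, j) (p j).[t i].
Proof.
move=> size_p; apply/matrixP => i j; rewrite !mxE (horner_coef_wide _ (size_p j)).
by apply: eq_bigr => m _; rewrite !mxE mulrC.
Qed.

Lemma sum_coef_mirror N (t u v : K) (p : {poly K}) : t != 0 -> (size p <= N)%N ->
  \sum_(m < N) (u * t ^+ m - v * t ^+ (N.-1 - m)) * p`_m =
  u * p.[t] - v * (t ^+ N.-1 * p.[t^-1]).
Proof.
move=> t_neq0 size_p; rewrite (horner_coef_wide t size_p) (horner_coef_wide t^-1 size_p).
rewrite !mulr_sumr -sumrB; apply: eq_bigr => m _.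
have le_m : (m <= N.-1)%N by have := ltn_ord m; lia.
by rewrite exprB ?unitfE // exprVn; ring.
Qed.

Lemma mirror_mx_mul_coef n (t u v : 'I_n -> K) (p q : 'I_n -> {poly K}) :
  (forall i, t i != 0) -> (forall j, size (p j) <= n + n)%N ->
  (forall j s, s != 0 -> s ^+ (n + n).-1 * (p j).[s^-1] = (q j).[s]) ->
  mirror_mx t u v *m coef_mx (n + n) p =
  \matrix_(i, j) (u i * (p j).[t i] - v i * (q j).[t i]).
Proof.
move=> t_neq0 size_p mirror_pq; apply/matrixP => i j; rewrite !mxE.
under eq_bigr do rewrite !mxE.
by rewrite sum_coef_mirror ?mirror_pq.
Qed.

End CoefficientMatrix.

Section Psi.
Variables (K : fieldType) (n : nat) (y : 'I_n -> K).

Definition psi j : {poly K} :=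
  \prod_(k < n | k != j) (('X - (y k)%:P) * (1 - (y k)%:P * 'X)).
Definition cpoly j := (1 - (y j)%:P * 'X) * psi j.
Definition dpoly j := ('X - (y j)%:P) * psi j.

Lemma horner_psi j t :
  (psi j).[t] = \prod_(k < n | k != j) ((t - y k) * (1 - y k * t)).
Proof. by rewrite horner_prod; apply: eq_bigr => k _; rewrite !hornerE. Qed.

Lemma horner_cpoly j t : (cpoly j).[t] = (1 - y j * t) * (psi j).[t].
Proof. by rewrite /cpoly !hornerE. Qed.

Lemma horner_dpoly j t : (dpoly j).[t] = (t - y j) * (psi j).[t].
Proof. by rewrite /dpoly !hornerE. Qed.

Lemma size_psi j : (size (psi j) <= (2 * n.-1).+1)%N.
Proof.
apply: leq_trans (size_poly_prod_leq _ _) _.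
have factor3 k : (size (('X - (y k)%:P) * (1 - (y k)%:P * 'X))%R <= 3)%N.
  by rewrite mulrC; apply: leq_trans (size_1subCX_mul _ _) _; rewrite size_XsubC.
have : (\sum_(k < n | k != j) size (('X - (y k)%:P) * (1 - (y k)%:P * 'X))%R
          <= \sum_(k < n | k != j) 3)%N by apply: leq_sum => k _; apply: factor3.
rewrite sum_nat_const cardC1 card_ord; move: (\sum_(k < n | _) _)%N => s; lia.
Qed.

Lemma size_cpoly j : (size (cpoly j) <= n + n)%N.
Proof.
apply: leq_trans (size_1subCX_mul _ _) (leq_ltn_trans (size_psi j) _).
by have := ltn_ord j; lia.
Qed.

Lemma size_dpoly j : (size (dpoly j) <= n + n)%N.
Proof.
apply: leq_trans (size_polyMleq _ _) _.
rewrite size_XsubC /= (leq_ltn_trans (size_psi j)) //; have := ltn_ord j; lia.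
Qed.

Lemma psi_mirror j t : t != 0 -> t ^+ (2 * n.-1) * (psi j).[t^-1] = (psi j).[t].
Proof.
move=> t_neq0; rewrite !horner_psi.
have -> : t ^+ (2 * n.-1) = \prod_(k in predC1 j) (t * t).
  by rewrite prodr_const cardC1 card_ord -expr2 -exprM.
by rewrite -big_split; apply: eq_bigr => k _ /=; field.
Qed.

Lemma cpoly_mirror j t : t != 0 -> t ^+ (n + n).-1 * (cpoly j).[t^-1] = (dpoly j).[t].
Proof.
move=> t_neq0; have -> : (n + n).-1 = (2 * n.-1).+1 by have := ltn_ord j; lia.
by rewrite horner_cpoly horner_dpoly -(psi_mirror j t_neq0) exprS; field.
Qed.

Lemma dpoly_mirror j t : t != 0 -> t ^+ (n + n).-1 * (dpoly j).[t^-1] = (cpoly j).[t].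
Proof.
move=> t_neq0; rewrite -[in RHS](invrK t) -cpoly_mirror ?invr_eq0 //.
by rewrite mulrA -exprMn mulfV // expr1n mul1r.
Qed.

Lemma psi_root j k : k != j -> (psi j).[y k] = 0.
Proof. by move=> neq_kj; rewrite horner_psi (bigD1 k) //= subrr !mul0r. Qed.

Lemma psi_rootV j k : y k != 0 -> k != j -> (psi j).[(y k)^-1] = 0.
Proof.
by move=> yk_neq0 neq_kj; rewrite horner_psi (bigD1 k) //= mulfV // subrr mulr0 mul0r.
Qed.

Lemma cpoly_root j k : k != j -> (cpoly j).[y k] = 0.
Proof. by move=> neq_kj; rewrite horner_cpoly psi_root ?mulr0. Qed.

Lemma dpoly_root j k : (dpoly j).[y k] = 0.
Proof.
have [->|neq_kj] := eqVneq k j; first by rewrite horner_dpoly subrr mul0r.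
by rewrite horner_dpoly psi_root ?mulr0.
Qed.

Lemma cpoly_rootV j k : y k != 0 -> (cpoly j).[(y k)^-1] = 0.
Proof.
move=> yk_neq0; have [<-|neq_kj] := eqVneq k j.
  by rewrite horner_cpoly mulfV // subrr mul0r.
by rewrite horner_cpoly psi_rootV ?mulr0.
Qed.

Lemma dpoly_rootV j k : y k != 0 -> k != j -> (dpoly j).[(y k)^-1] = 0.
Proof. by move=> yk_neq0 neq_kj; rewrite horner_dpoly psi_rootV ?mulr0. Qed.

Lemma mirror_mx_mul_cpoly (t v v1 : 'I_n -> K) : (forall i, t i != 0) ->
  mirror_mx t v v1 *m coef_mx (n + n) (cpoly) =
  \matrix_(i, j) (v i * (cpoly j).[t i] - v1 i * (dpoly j).[t i]).
Proof.
move=> t_neq0; apply: mirror_mx_mul_coef => // [j|j s].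
  exact: size_cpoly.
exact: cpoly_mirror.
Qed.

Lemma mirror_mx_mul_dpoly (t v v1 : 'I_n -> K) : (forall i, t i != 0) ->
  mirror_mx t v v1 *m coef_mx (n + n) (dpoly) =
  \matrix_(i, j) (v i * (dpoly j).[t i] - v1 i * (cpoly j).[t i]).
Proof.
move=> t_neq0; apply: mirror_mx_mul_coef => // [j|j s].
  exact: size_dpoly.
exact: dpoly_mirror.
Qed.

End Psi.

Section GenericPoints.
Variables (K : fieldType) (n : nat) (y : 'I_n -> K).
Hypothesis y_neq0 : forall j, y j != 0.
Hypothesis y_inj : forall j k, j != k -> y j != y k.
Hypothesis y_mul_neq1 : forall j k, 1 - y j * y k != 0.

Let gam j := (cpoly y j).[y j].
Let coefs := row_mx (coef_mx (n + n) (cpoly y)) (coef_mx (n + n) (dpoly y)).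

Lemma gam_neq0 j : gam j != 0.
Proof.
rewrite /gam horner_cpoly horner_psi mulf_neq0 //; apply/prodf_neq0 => k neq_kj.
by rewrite mulf_neq0 // subr_eq0 y_inj // eq_sym.
Qed.

Lemma det_Vandermonde_mirror_points :
  \det (Vandermonde (n + n) (row_mx (\row_j y j) (\row_j (y j)^-1))) =
  \prod_j (dpoly y j).[(y j)^-1].
Proof.
rewrite det_Vandermonde prod_lt_row_mx.
have -> : \prod_j (dpoly y j).[(y j)^-1] =
    \prod_(j < n) \prod_(k < n) ((y j)^-1 - y k) *
    \prod_(j < n) \prod_(k < n | k != j) (1 - y k * (y j)^-1).
  rewrite -big_split /=; apply: eq_bigr => j _.
  rewrite horner_dpoly horner_psi big_split /= mulrA.
  by rewrite [in RHS](bigD1 j).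
rewrite prod_neq_pairs [X in _ * X * _]exchange_big /=.
have -> : \prod_(i < n) \prod_(j < n | (i < j)%N)
    ((1 - y j * (y i)^-1) * (1 - y i * (y j)^-1)) =
    \prod_(i < n) \prod_(j < n | (i < j)%N) (y j - y i) *
    \prod_(i < n) \prod_(j < n | (i < j)%N) ((y j)^-1 - (y i)^-1).
  rewrite -big_split /=; apply: eq_bigr => i _.
  rewrite -big_split /=; apply: eq_bigr => j _.
  by field; rewrite !y_neq0.
ring.
Qed.

Lemma det_coefs : \det coefs = \prod_j gam j.
Proof.
pose V := Vandermonde (n + n) (row_mx (\row_j y j) (\row_j (y j)^-1)).
have VT : V^T = col_mx (pow_mx (n + n) y) (pow_mx (n + n) (fun j => (y j)^-1)).
  by apply/matrixP => i m; rewrite !mxE; case: splitP => k _; rewrite !mxE.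
have eval_diag (p : 'I_n -> {poly K}) (t : 'I_n -> K) :
    (forall j k, k != j -> (p j).[t k] = 0) ->
    \matrix_(k, j) (p j).[t k] = diag_mx (\row_j (p j).[t j]).
  move=> p_root; apply/matrixP => k j; rewrite !mxE.
  by have [<-|neq_kj] := eqVneq k j; rewrite ?mulr1n // p_root ?mulr0n.
have VTcoefs : V^T *m coefs =
    block_mx (diag_mx (\row_j gam j)) 0 0 (diag_mx (\row_j (dpoly y j).[(y j)^-1])).
  rewrite VT mul_col_row !pow_mx_mul_coef; try by move=> j; rewrite ?size_cpoly ?size_dpoly.
  rewrite (eval_diag (cpoly y) y); last by move=> j k; apply: cpoly_root.
  rewrite (eval_diag (dpoly y) (fun j => (y j)^-1)); last by move=> j k; apply: dpoly_rootV.
  congr block_mx; apply/matrixP => k j; rewrite !mxE.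
    by rewrite dpoly_root.
  by rewrite cpoly_rootV.
have delta_neq0 : \prod_j (dpoly y j).[(y j)^-1] != 0.
  apply/prodf_neq0 => j _; apply: contraNneq (gam_neq0 j) => delta0.
  by rewrite /gam -dpoly_mirror // delta0 mulr0.
have := det_mulmx V^T coefs; rewrite VTcoefs det_ublock !det_diag det_tr.
rewrite /V det_Vandermonde_mirror_points mulrC.
under eq_bigr do rewrite mxE; under [X in _ * X]eq_bigr do rewrite mxE.
by move=> /(mulfI delta_neq0) <-.
Qed.

Lemma det_mirror_block_generic (x u u1 v v1 : 'I_n -> K) :
  (forall i, x i != 0) -> (forall j, v1 j != 0) ->
  \det (mirror_block x y u u1 v v1) = \det (qnum_mx x y u u1 v v1).
Proof.
move=> x_neq0 v1_neq0.
have y_rows_c : mirror_mx y v v1 *m coef_mx (n + n) (cpoly y) = diag_mx (\row_j (v j * gam j)).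
  rewrite mirror_mx_mul_cpoly //; apply/matrixP => k j; rewrite !mxE dpoly_root mulr0 subr0.
  by have [<-|neq_kj] := eqVneq k j; rewrite ?mulr1n // cpoly_root // mulr0 mulr0n.
have y_rows_d : mirror_mx y v v1 *m coef_mx (n + n) (dpoly y) =
    diag_mx (\row_j (- (v1 j * gam j))).
  rewrite mirror_mx_mul_dpoly //; apply/matrixP => k j; rewrite !mxE dpoly_root mulr0 sub0r.
  by have [<-|neq_kj] := eqVneq k j; rewrite ?mulr1n // cpoly_root // mulr0 oppr0 mulr0n.
have schur : \det (mirror_block x y u u1 v v1 *m coefs) =
    \det (qnum_mx x y u u1 v v1 *m diag_mx (\row_j gam j)).
  rewrite mul_col_row y_rows_c y_rows_d det_block_mx_diag; last first.
    by move=> j; rewrite mxE oppr_eq0 mulf_neq0 ?gam_neq0.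
  congr (\det _); rewrite mirror_mx_mul_cpoly // mirror_mx_mul_dpoly // !mul_mx_diag.
  apply/matrixP => i j; rewrite !mxE /gam !horner_cpoly !horner_dpoly horner_psi.
  under eq_bigr do rewrite [y _ * x i]mulrC.
  by rewrite /qnum; ring.
move: schur; rewrite !det_mulmx det_coefs det_diag.
under [X in _ = _ * X]eq_bigr do rewrite mxE.
by move/mulIf; apply; apply/prodf_neq0 => j _; apply: gam_neq0.
Qed.

End GenericPoints.

Lemma map_mirror_block (R S : comPzRingType) (f : {rmorphism R -> S}) n
    (x y u u1 v v1 : 'I_n -> R) (x' y' u' u1' v' v1' : 'I_n -> S) :
  (forall i, f (x i) = x' i) -> (forall i, f (y i) = y' i) ->
  (forall i, f (u i) = u' i) -> (forall i, f (u1 i) = u1' i) ->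
  (forall i, f (v i) = v' i) -> (forall i, f (v1 i) = v1' i) ->
  map_mx f (mirror_block x y u u1 v v1) = mirror_block x' y' u' u1' v' v1'.
Proof.
move=> fx fy fu fu1 fv fv1; apply/matrixP => i m; rewrite !mxE.
by case: splitP => k _; rewrite !mxE rmorphB !rmorphM !rmorphXn ?fx ?fy ?fu ?fu1 ?fv ?fv1.
Qed.

Lemma map_qnum_mx (R S : comPzRingType) (f : {rmorphism R -> S}) n
    (x y u u1 v v1 : 'I_n -> R) (x' y' u' u1' v' v1' : 'I_n -> S) :
  (forall i, f (x i) = x' i) -> (forall i, f (y i) = y' i) ->
  (forall i, f (u i) = u' i) -> (forall i, f (u1 i) = u1' i) ->
  (forall i, f (v i) = v' i) -> (forall i, f (v1 i) = v1' i) ->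
  map_mx f (qnum_mx x y u u1 v v1) = qnum_mx x' y' u' u1' v' v1'.
Proof.
move=> fx fy fu fu1 fv fv1; apply/matrixP => i j; rewrite !mxE rmorphM rmorph_prod /qnum.
rewrite !(rmorphD, rmorphN, rmorphM, rmorph1) ?fx ?fy ?fu ?fu1 ?fv ?fv1; congr (_ * _).
by apply: eq_bigr => k _; rewrite !(rmorphB, rmorphM, rmorph1) fx fy.
Qed.

Lemma XnaddC_neq (R : nzRingType) (c d : R) (j k : nat) :
  j != k -> 'X^(j.+1) + c%:P != 'X^(k.+1) + d%:P.
Proof.
move=> neq_jk; apply: contra_neq neq_jk => /(congr1 (fun p : {poly R} => size p)).
by rewrite !size_XnaddC // => -[].
Qed.

Lemma mul_XnaddC_neq1 (R : idomainType) (c d : R) (j k : nat) :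
  ('X^(j.+1) + c%:P) * ('X^(k.+1) + d%:P) != 1.
Proof.
apply/eqP => /(congr1 (fun p : {poly R} => size p)).
by rewrite size_poly1 size_mul -?size_poly_eq0 ?size_XnaddC //; lia.
Qed.

Lemma det_mirror_block (F : fieldType) n (x y u u1 v v1 : 'I_n -> F) :
  \det (mirror_block x y u u1 v v1) = \det (qnum_mx x y u u1 v v1).
Proof.
pose xX i : {poly F} := 'X + (x i)%:P.
pose yX (j : 'I_n) : {poly F} := 'X^(j.+1) + (y j)%:P.
pose v1X j : {poly F} := 'X + (v1 j)%:P.
pose C (w : 'I_n -> F) i := (w i)%:P.
pose frac (p : 'I_n -> {poly F}) i := FracField.tofrac (p i).
have XaddC_neq0 c : ('X + c%:P : {poly F}) != 0 by rewrite -size_poly_eq0 size_XaddC.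
have generic : \det (mirror_block xX yX (C u) (C u1) (C v) v1X) =
               \det (qnum_mx xX yX (C u) (C u1) (C v) v1X).
  apply/eqP; rewrite -tofrac_eq; apply/eqP; rewrite -!det_map_mx.
  rewrite (map_mirror_block (x' := frac xX) (y' := frac yX) (u' := frac (C u))
    (u1' := frac (C u1)) (v' := frac (C v)) (v1' := frac v1X)) //.
  rewrite (map_qnum_mx (x' := frac xX) (y' := frac yX) (u' := frac (C u))
    (u1' := frac (C u1)) (v' := frac (C v)) (v1' := frac v1X)) //.
  apply: det_mirror_block_generic => [j|j k|j k|i|j];
    rewrite /frac /xX /v1X ?tofrac_eq0 ?tofrac_eq ?XaddC_neq0 //.
  - by rewrite -size_poly_eq0 size_XnaddC.
  - exact: XnaddC_neq.
  - rewrite -rmorphM -(rmorph1 (@FracField.tofrac {poly F})) -rmorphB tofrac_eq0.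
    by rewrite subr_eq0 eq_sym mul_XnaddC_neq1.
have eval0 (w : 'I_n -> F) (p : 'I_n -> {poly F}) : (forall i, (p i).[0] = w i) ->
    forall i, horner_eval 0 (p i) = w i by [].
have := congr1 (horner_eval 0) generic; rewrite -!det_map_mx.
rewrite (map_mirror_block (x' := x) (y' := y) (u' := u) (u1' := u1) (v' := v) (v1' := v1))
  ?(map_qnum_mx (x' := x) (y' := y) (u' := u) (u1' := u1) (v' := v) (v1' := v1)) //;
  by apply: eval0 => i; unfold xX, yX, C, v1X; rewrite !hornerE ?expr0n ?add0r.
Qed.

Definition shear_mx (R : pzRingType) N (z : R) : 'M[R]_N :=
  \matrix_(i, j) ((i == j :> nat)%:R + z * (i == j.+1 :> nat)%:R).

Lemma det_shear_mx (R : comPzRingType) N (z : R) : \det (shear_mx N z) = 1.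
Proof.
rewrite det_trig; last first.
  apply/is_trig_mxP => i j lt_ij; rewrite mxE.
  by rewrite ltn_eqF // ltn_eqF ?mulr0 ?addr0 // leqW.
by apply: big1 => i _; rewrite mxE eqxx eqn_leq ltnn andbF mulr0 addr0.
Qed.

Lemma mulmx_shear_mx (R : comPzRingType) m N (z : R) (A : 'M[R]_(m, N)) i j :
  (A *m shear_mx N z) i j =
  A i j + z * \sum_(k < N) A i k * (k == j.+1 :> nat)%:R.
Proof.
rewrite mxE; under eq_bigr do rewrite mxE mulrDr.
rewrite big_split /= (sum_delta _ (erefl (j : nat))) mulr_sumr; congr (_ + _).
by apply: eq_bigr => k _; rewrite mulrCA.
Qed.

Section QmatWmat.
Variables (F : fieldType) (n : nat) (x y a b : 'I_n -> F) (z : F).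

Let u i := 1 + x i * z.
Let u1 i := a i * (x i + z).
Let v j := 1 + y j * z.
Let v1 j := b j * (y j + z).

Lemma det_Wmat : \det (Wmat x y a b z) = \det (mirror_block x y u u1 v v1).
Proof.
set W := Wmat x y a b z.
rewrite -[LHS]mulr1 -(det_shear_mx (n + n + 1) z) -det_mulmx -[W *m _]submxK.
have next (j : 'I_(n + n)) : (j.+1 < n + n + 1)%N by rewrite addn1 ltnS.
have W_next i (j : 'I_(n + n)) :
    (W *m shear_mx _ z) i (lshift 1 j) = W i (lshift 1 j) + z * W i (Ordinal (next j)).
  by rewrite mulmx_shear_mx (@sum_delta _ _ _ _ (Ordinal (next j))).
have sub_next (j : 'I_(n + n)) : (n + n - j.+1 = (n + n).-1 - j)%N.
  by have := ltn_ord j; lia.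
have pow_next (t : F) (j : 'I_(n + n)) : t ^+ (n + n - j) = t * t ^+ ((n + n).-1 - j).
  by rewrite -exprS; congr (_ ^+ _); have := ltn_ord j; lia.
have -> : dlsubmx (W *m shear_mx _ z) = 0.
  apply/matrixP => i j; rewrite [LHS]mxE [LHS]mxE W_next [RHS]mxE /W /Wmat !col_mxEd !mxE /=.
  by rewrite pow_next sub_next; ring.
have -> : drsubmx (W *m shear_mx _ z) = 1%:M.
  apply/matrixP => i j; rewrite [LHS]mxE [LHS]mxE !ord1 mulmx_shear_mx sum_delta_out.
    by rewrite /W /Wmat col_mxEd !mxE /= addn0 subnn expr0 mulr0 addr0.
  by rewrite /= addn0 addn1.
rewrite det_ublock det1 mulr1; congr (\det _); apply/matrixP => i j.
rewrite [LHS]mxE [LHS]mxE W_next /W /Wmat /mirror_block.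
case: (split_ordP i) => k ->; rewrite !(col_mxEu, col_mxEd) !mxE /= pow_next sub_next;
  by rewrite exprS /u /u1 /v /v1; ring.
Qed.

Hypothesis x_sub_y_neq0 : forall i j, x i - y j != 0.
Hypothesis one_sub_xy_neq0 : forall i j, 1 - x i * y j != 0.

Lemma Qmat_qnum_mx : Qmat x y a b z =
  diag_mx (\row_i (- (\prod_(k < n) ((x i - y k) * (1 - x i * y k)))^-1)) *m
  qnum_mx x y u u1 v v1.
Proof.
rewrite mul_diag_mx; apply/matrixP => i j; rewrite !mxE (bigD1 j) //=.
have prod_neq0 : \prod_(k < n | k != j) ((x i - y k) * (1 - x i * y k)) != 0.
  by apply/prodf_neq0 => k _; rewrite mulf_neq0.
rewrite /qfun /qnum /u /u1 /v /v1; field.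
by rewrite prod_neq0 x_sub_y_neq0 one_sub_xy_neq0.
Qed.

End QmatWmat.

Theorem lemma4p5 (F : fieldType) (n : nat) (x y a b : 'I_n -> F) (z : F)
  (hxy : forall i j, x i - y j != 0)
  (hxy1 : forall i j, 1 - x i * y j != 0) :
  \det (Qmat x y a b z) =
    (-1) ^+ n / (\prod_(i < n) \prod_(j < n) ((x i - y j) * (1 - x i * y j)))
    * \det (Wmat x y a b z).
Proof.
rewrite Qmat_qnum_mx // det_mulmx det_diag det_Wmat det_mirror_block; congr (_ * _).
under eq_bigr do rewrite mxE.
by rewrite prodrN prodfV card_ord.
Qed.
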